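(* Let $n\geq 1$. There is a bijection $\phi$ from the set of functions $f\colon[n+1]\to[n]$ to the set of triply rooted trees on $[n]$ such that, for every such $f$: (i) the orbit of $n+1$ under $f$ with $n+1$ itself removed, i.e. $\{f(n+1),f^2(n+1),\dots\}$, is equal to the set of ancestors of the second root of $\phi(f)$; and (ii) the set of periodic points of $f$ is equal to the set of ancestors of the third root of $\phi(f)$.
   Context: $[m]=\{1,\dots,m\}$. A triply rooted tree on $[n]$ is a labeled tree with vertex set $[n]$ together with three distinguished vertices $r_1,r_2,r_3$ (first, second, third root), not necessarily distinct. Ancestors are taken with respect to the first root: a vertex $u$ is an ancestor of $v$ if $u$ lies on the unique path from $r_1$ to $v$ (in particular $v$ is an ancestor of itself and $r_1$ is an ancestor of every vertex). For $f\colon[n+1]\to[n]$, the orbit of $x$ is $\{x,f(x),f^2(x),\dots\}$ (where $f$ is iterated, which makes sense since $[n]\subseteq[n+1]$), and $x$ is a periodic point of $f$ if $f^j(x)=x$ for some $j\geq 1$. *)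

(* Convention: the element k of [m] = {1,...,m} is encoded as
   the ordinal k-1 : 'I_m.  Thus [n] is 'I_n, [n+1] is 'I_n.+1, the point n+1
   is ord_max, and the inclusion [n] ⊆ [n+1] is widen_ord (leqnSn n). *)
From mathcomp Require Import all_boot.
Set Implicit Arguments.
Unset Strict Implicit.
Unset Printing Implicit Defensive.

Definition incl (n : nat) (x : 'I_n) : 'I_n.+1 := widen_ord (leqnSn n) x.

Definition fself (n : nat) (f : {ffun 'I_n.+1 -> 'I_n}) (x : 'I_n.+1) : 'I_n.+1 :=
  incl (f x).

Definition periodic (n : nat) (f : {ffun 'I_n.+1 -> 'I_n}) (x : 'I_n.+1) : Prop :=
  exists j, 1 <= j /\ iter j (fself f) x = x.

Definition in_orbit_top (n : nat) (f : {ffun 'I_n.+1 -> 'I_n}) (y : 'I_n.+1) : Prop :=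
  exists k, 1 <= k /\ iter k (fself f) ord_max = y.

(* Graphs on vertex set [n] given by their edge sets (sets of 2-element sets). *)
Definition adj (n : nat) (E : {set {set 'I_n}}) : rel 'I_n :=
  fun u v => [set u; v] \in E.

Definition is_tree (n : nat) (E : {set {set 'I_n}}) : Prop :=
  (forall e, e \in E -> #|e| = 2) /\
  (forall u v : 'I_n, connect (adj E) u v) /\
  (forall c : seq 'I_n, uniq c -> 3 <= size c -> ~~ cycle (adj E) c).

Definition trt (n : nat) : Type := ({set {set 'I_n}} * 'I_n * 'I_n * 'I_n)%type.
Definition tedges (n : nat) (t : trt n) : {set {set 'I_n}} := t.1.1.1.
Definition root1 (n : nat) (t : trt n) : 'I_n := t.1.1.2.
Definition root2 (n : nat) (t : trt n) : 'I_n := t.1.2.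
Definition root3 (n : nat) (t : trt n) : 'I_n := t.2.

Definition is_trt (n : nat) (t : trt n) : Prop := is_tree (tedges t).

Definition ancestor (n : nat) (t : trt n) (u v : 'I_n) : Prop :=
  exists p : seq 'I_n,
    [/\ path (adj (tedges t)) (root1 t) p, last (root1 t) p = v,
        uniq (root1 t :: p) & u \in root1 t :: p].

(* Write g for the restriction of f to [n] and a = f(n+1).  A rooted tree on
   [n] is the same as a parent map p with a root r1 that every vertex reaches
   by iterating p; its edges are the pairs {x, p x}.  From f, list the
   g-periodic points starting with the cycle c, g c, g^2 c, ... through the
   point c where the orbit of a becomes periodic, followed by the remaining
   periodic points; lay out their images under g as a path, the spine, from
   the first to the third root, and hang every non-periodic x below g x.  The
   second root is a.  The ancestors of the third root are then exactly the
   spine, i.e. the periodic points; walking up from a follows g down to c and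
   then runs backwards around the cycle of c, so the ancestors of a form its
   orbit.  Conversely the spine is the path between the first and third roots,
   c is the first spine vertex above a, and the cycle of c is the initial
   segment of the spine ending at c, which recovers g. *)

From mathcomp Require Import all_boot zify.
From Stdlib Require Import FunctionalExtensionality.

Set Implicit Arguments.
Unset Strict Implicit.
Unset Printing Implicit Defensive.

Lemma set2_eq_cases (T : finType) (x y z w : T) :
  [set x; y] = [set z; w] -> (x = z /\ y = w) \/ (x = w /\ y = z).
Proof.
move=> E.
have hx : x \in [set z; w] by rewrite -E set21.
have hy : y \in [set z; w] by rewrite -E set22.
have hz : z \in [set x; y] by rewrite E set21.
have hw : w \in [set x; y] by rewrite E set22.
case/set2P: hx; case/set2P: hy; case/set2P: hz; case/set2P: hw;
  move=> *; subst; auto.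
Qed.

Lemma adj_sym (n : nat) (E : {set {set 'I_n}}) : symmetric (adj E).
Proof. by move=> x y; rewrite /adj setUC. Qed.

Lemma size_uniq_ord (n : nat) (s : seq 'I_n) : uniq s -> size s <= n.
Proof. by move/card_uniqP <-; have := max_card (mem s); rewrite card_ord. Qed.

Lemma iter_collision (n : nat) (h : 'I_n -> 'I_n) x :
  exists i j, [/\ i < j, j <= n & iter i h x = iter j h x].
Proof.
pose F (k : 'I_n.+1) := iter k h x.
have : ~~ injectiveb F.
  by apply/negP => /injectiveP/leq_card; rewrite !card_ord ltnn.
case/injectivePn => i [j] ij Fij.
have hi := ltn_ord i; have hj := ltn_ord j.
case: (ltngtP i j) => [lt|lt|eq].
- by exists i, j; split.
- by exists j, i; split.
- by move: ij; rewrite -val_eqE /= eq eqxx.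
Qed.

Lemma iter_periodic (T : Type) (f : T -> T) x j m :
  iter j f x = x -> iter (m * j) f x = x.
Proof. by move=> h; rewrite iterM; apply: iter_fix. Qed.

Lemma find_nth_first (T : Type) (x0 : T) (P : pred T) s i : i < size s ->
  P (nth x0 s i) -> (forall j, j < i -> ~~ P (nth x0 s j)) -> find P s = i.
Proof.
move=> hi hP hb; case: (ltngtP (find P s) i) => // h.
  have hh : has P s by rewrite has_find; lia.
  by move: (hb _ h); rewrite nth_find.
by move: (before_find x0 h); rewrite hP.
Qed.

Lemma index_nth_first (T : eqType) (x0 x : T) s i : i < size s ->
  nth x0 s i = x -> (forall j, j < i -> nth x0 s j != x) -> index x s = i.
Proof.
by move=> hi hx hb; apply: (@find_nth_first T x0 (pred1 x)) => //=; rewrite hx.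
Qed.

Lemma iter_nth_pred (T : Type) (x0 : T) (q : T -> T) s :
  (forall i, i < size s -> q (nth x0 s i) = nth x0 s i.-1) ->
  forall i j, i < size s -> iter j q (nth x0 s i) = nth x0 s (i - j).
Proof.
move=> H i j hi; elim: j => [|j IH]; first by rewrite subn0.
by rewrite iterS IH H ?subnS //; lia.
Qed.

Lemma map_traject (T : Type) (f : T -> T) x k :
  map f (traject f x k) = traject f (f x) k.
Proof. by elim: k x => // k IH x; rewrite !trajectS /= IH. Qed.

Lemma mem_drop_uniq (T : eqType) (s : seq T) k x : uniq s ->
  (x \in drop k s) = (x \in s) && (x \notin take k s).
Proof.
move=> us; rewrite -{2}(cat_take_drop k s) mem_cat.
move: us; rewrite -{1}(cat_take_drop k s) cat_uniq => /and3P [_ hd _].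
case: (boolP (x \in take k s)) => h /=; last by rewrite andbT.
by apply/negP => hx; move/hasP: hd; apply; exists x.
Qed.

Section ParentFunction.
Variables (n : nat) (p : 'I_n -> 'I_n) (r : 'I_n).
Hypothesis p_root : p r = r.
Hypothesis p_reach : forall x, exists k, iter k p x = r.

Definition parent_edges := [set [set x; p x] | x in [set x | x != r]].

Lemma reach_rootb x : exists k, iter k p x == r.
Proof. by have [k hk] := p_reach x; exists k; apply/eqP. Qed.

Definition depth x := ex_minn (reach_rootb x).

Lemma iter_depth x : iter (depth x) p x = r.
Proof. by rewrite /depth; case: ex_minnP => m /eqP. Qed.

Lemma depth_min x k : iter k p x = r -> depth x <= k.
Proof. by rewrite /depth; case: ex_minnP => m _ H /eqP /H. Qed.

Lemma iter_ge_depth x k : depth x <= k -> iter k p x = r.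
Proof. by move=> h; rewrite -(subnK h) iterD iter_depth iter_fix. Qed.

Lemma depth_eq0 x : (depth x == 0) = (x == r).
Proof.
apply/eqP/eqP => [h|->]; first by rewrite -(iter_depth x) h.
by apply/eqP; rewrite -leqn0; apply: depth_min.
Qed.

Lemma depth_parent_lt x : x != r -> depth (p x) < depth x.
Proof.
rewrite -depth_eq0 => h.
have : iter (depth x).-1 p (p x) = r by rewrite -iterSr prednK ?lt0n // iter_depth.
move/depth_min; lia.
Qed.

Lemma depth_parent_le x : depth (p x) <= depth x.
Proof. by case: (eqVneq x r) => [->|/depth_parent_lt/ltnW]; rewrite ?p_root. Qed.

Lemma depth_iter_le j x : depth (iter j p x) <= depth x.
Proof. by elim: j => //= j IH; apply: leq_trans (depth_parent_le _) IH. Qed.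

Lemma depth_iter_lt j x : 0 < j -> x != r -> depth (iter j p x) < depth x.
Proof.
case: j => // j _ xr; rewrite iterSr.
exact: leq_ltn_trans (depth_iter_le _ _) (depth_parent_lt xr).
Qed.

Lemma iter_fixpoint_root j x : 0 < j -> iter j p x = x -> x = r.
Proof.
move=> j0 h; apply/eqP; apply: contraT => xr.
by have := depth_iter_lt j0 xr; rewrite h ltnn.
Qed.

Lemma parent_neq x : x != r -> p x != x.
Proof. by apply: contra => /eqP /(@iter_fixpoint_root 1) ->. Qed.

Lemma iter_inj_le_depth v i j : i <= depth v -> j <= depth v ->
  iter i p v = iter j p v -> i = j.
Proof.
wlog ij : i j / i <= j.
  move=> H hi hj e; case: (leqP i j) => h; first exact: H.
  by symmetry; apply: H => //; apply: ltnW.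
move=> hi hj e; case: (ltnP i j) => [lt|ji]; last by apply/eqP; rewrite eqn_leq ij ji.
have : iter (j - i) p (iter i p v) = iter i p v by rewrite -iterD subnK // ltnW.
move/iter_fixpoint_root; rewrite subn_gt0 => /(_ lt) /depth_min; lia.
Qed.

Lemma depth_lt_n x : depth x < n.
Proof.
have [i [j [ij jn e]]] := iter_collision p x.
have : iter (j - i) p (iter i p x) = iter i p x by rewrite -iterD subnK // ltnW.
move/iter_fixpoint_root; rewrite subn_gt0 => /(_ ij) /depth_min; lia.
Qed.

Lemma adj_parent_edges x y :
  adj parent_edges x y = ((x != r) && (y == p x)) || ((y != r) && (x == p y)).
Proof.
apply/idP/idP.
  case/imsetP => z; rewrite inE => zr /set2_eq_cases [[-> ->]|[-> ->]].
    by rewrite zr eqxx.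
  by rewrite zr eqxx orbT.
case/orP => /andP [xr /eqP ->].
  by apply/imsetP; exists x; rewrite ?inE.
by apply/imsetP; exists y; rewrite ?inE // setUC.
Qed.

Lemma adj_parent_edges_depth x y :
  adj parent_edges x y -> depth y <= depth x -> (x != r) && (y == p x).
Proof.
rewrite adj_parent_edges => /orP [//|/andP [yr /eqP e]]; rewrite e.
by have := depth_parent_lt yr; lia.
Qed.

Lemma connect_root x : connect (adj parent_edges) x r.
Proof.
have [k <-] := p_reach x.
elim: k => [|k IH]; first exact: connect0.
apply: connect_trans IH _; rewrite iterS.
case: (eqVneq (iter k p x) r) => [->|h]; first by rewrite p_root connect0.
by apply: connect1; rewrite adj_parent_edges h eqxx.
Qed.

(* A cycle has a vertex x of maximal depth; both neighbours of x on the cycle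
   must then be its parent, contradicting uniqueness. *)
Lemma parent_edges_tree : is_tree parent_edges.
Proof.
split; [|split].
- move=> e /imsetP [z]; rewrite inE => zr ->.
  by rewrite cards2 eq_sym parent_neq.
- move=> u v; apply: connect_trans (connect_root u) _.
  by rewrite (sym_connect_sym (@adj_sym n parent_edges)) connect_root.
- move=> c uc c3; apply/negP => cc.
  have [x0 x0c] : exists x0, x0 \in c.
    by case: c c3 {uc cc} => // y c _; exists y; rewrite inE eqxx.
  case: (@arg_maxnP _ x0 (mem c) depth x0c) => x xc xm.
  case: (rot_to xc) => i s ec.
  have := cc; rewrite -(rot_cycle i) ec /= rcons_path => /andP [ps lx].
  have us : uniq (x :: s) by rewrite -ec rot_uniq.
  have ss : 2 <= size s by move: c3; rewrite -(size_rot i) ec.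
  case: s ec ps lx us ss => [//|y [//|z t]] ec ps lx us _.
  have inc w : w \in x :: y :: z :: t -> w \in c by rewrite -ec mem_rot.
  have hy : adj parent_edges x y by case/andP: ps.
  have hl : adj parent_edges x (last z t) by rewrite adj_sym.
  have yc : y \in c by apply: inc; rewrite !inE eqxx orbT.
  have lc : last z t \in c by apply: inc; rewrite in_cons in_cons mem_last !orbT.
  have /andP [_ /eqP ey] := adj_parent_edges_depth hy (xm _ yc).
  have /andP [_ /eqP el] := adj_parent_edges_depth hl (xm _ lc).
  move: us; rewrite /= => /and3P [_ /negP hyl _]; apply: hyl.
  by rewrite ey -el mem_last.
Qed.

Lemma path_parent_edges_down s x :
  path (adj parent_edges) x s -> uniq (x :: s) -> (x = r \/ p x \notin s) ->
  path (fun u v => u == p v) x s.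
Proof.
elim: s x => [//|y s IH] x /= /andP [axy ps] /and3P [xys ys us] h.
move: axy; rewrite adj_parent_edges => /orP [/andP [xr /eqP e]|/andP [yr /eqP e]].
  case: h => [/eqP|]; first by rewrite (negbTE xr).
  by rewrite -e inE eqxx.
rewrite e eqxx /=; apply: IH => //; first by rewrite /= ys.
by right; rewrite -e; move: xys; rewrite inE negb_or => /andP [].
Qed.

Lemma path_parent_iter s x u : path (fun u v => u == p v) x s -> u \in x :: s ->
  exists k, iter k p (last x s) = u.
Proof.
elim: s x u => [|y s IH] x u /=; first by rewrite inE => _ /eqP ->; exists 0.
case/andP => /eqP e ps; rewrite inE => /orP [/eqP ->|/(IH _ _ ps) //].
have [k hk] := IH _ _ ps (mem_head _ _); exists k.+1; by rewrite iterS hk.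
Qed.

Lemma ancestor_parent_edges r2 r3 u v :
  ancestor (parent_edges, r, r2, r3) u v <-> exists k, iter k p v = u.
Proof.
split.
  move=> [s [ps ls us uin]]; rewrite -ls; apply: path_parent_iter uin.
  exact: path_parent_edges_down ps us (or_introl erefl).
move=> [k hk]; set d := depth v.
pose F i := iter (d - i) p v.
exists (map F (iota 1 d)).
have Er : r :: map F (iota 1 d) = map F (iota 0 d.+1).
  by rewrite /= /F subn0 iter_depth.
split.
- apply/(pathP r) => i; rewrite size_map size_iota => id.
  rewrite Er (nth_map 0); last by rewrite size_iota; lia.
  rewrite (nth_map 0); last by rewrite size_iota.
  rewrite !nth_iota //; last lia.
  rewrite /F adj_sym adj_parent_edges; apply/orP; left.
  have -> : d - (0 + i) = (d - (1 + i)).+1 by lia.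
  rewrite iterS eqxx andbT; apply/negP => /eqP /depth_min; rewrite -/d; lia.
- rewrite (last_nth r) Er size_map size_iota (nth_map 0) ?size_iota // nth_iota //.
  by rewrite /F add0n subnn.
- rewrite Er map_inj_in_uniq ?iota_uniq // => i j; rewrite !mem_iota => hi hj.
  by rewrite /F => /iter_inj_le_depth; lia.
- rewrite Er; case: (leqP k d) => h.
    apply/mapP; exists (d - k); first by rewrite mem_iota; lia.
    by rewrite /F subKn.
  apply/mapP; exists 0; first by rewrite mem_iota.
  by rewrite /F subn0 iter_depth -hk iter_ge_depth //; apply: ltnW.
Qed.

End ParentFunction.

Lemma parent_edges_inj n (p q : 'I_n -> 'I_n) r (p_root : p r = r)
    (p_reach : forall x, exists k, iter k p x = r) (q_root : q r = r)
    (q_reach : forall x, exists k, iter k q x = r) :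
  parent_edges p r = parent_edges q r -> p =1 q.
Proof.
move=> E x; case: (eqVneq x r) => [->|xr]; first by rewrite p_root q_root.
have : exists k, iter k q x = q x by exists 1.
move/(ancestor_parent_edges q_root q_reach r r); rewrite -E.
move/(ancestor_parent_edges p_root p_reach) => [[/= e|j hj]].
  by move: (parent_neq q_root q_reach xr); rewrite -e eqxx.
have hlt := depth_iter_lt p_root p_reach (ltn0Sn j) xr; rewrite hj in hlt.
have : adj (parent_edges p r) x (q x) by rewrite E adj_parent_edges xr eqxx.
rewrite adj_parent_edges => /orP [/andP [_ /eqP] //|/andP [_ /eqP e]].
by have := depth_parent_le p_root p_reach (q x); rewrite -e; lia.
Qed.

Section TreeParent.
Variables (n : nat) (E : {set {set 'I_n}}) (r : 'I_n).
Hypothesis E_tree : is_tree E.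

Definition has_path_of_size x k :=
  [exists s : k.-tuple 'I_n, path (adj E) x s && (last x s == r)].

Lemma exists_path_to_root x : exists k, has_path_of_size x k.
Proof.
case: E_tree => _ [/(_ x r) /connectP [s ps ls] _].
by exists (size s); apply/existsP; exists (in_tuple s); rewrite /= ps -ls eqxx.
Qed.

Definition root_dist x := ex_minn (exists_path_to_root x).

Lemma root_dist_step x : x != r -> exists2 y, adj E x y & root_dist y < root_dist x.
Proof.
move=> xr; rewrite {2}/root_dist; case: ex_minnP => m /existsP [t /andP [pt lt]] _.
have st := size_tuple t.
case: (tval t) pt lt st => [|y s] /=; first by rewrite (negbTE xr).
case/andP => axy ps ls ss; exists y => //.
rewrite /root_dist; case: ex_minnP => m' _ H.
have : has_path_of_size y (size s).
  by apply/existsP; exists (in_tuple s); rewrite /= ps ls.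
by move/H; rewrite -ss.
Qed.

Definition tree_parent x :=
  if x == r then r else odflt r [pick y | adj E x y && (root_dist y < root_dist x)].

Lemma tree_parentP x :
  x != r -> adj E x (tree_parent x) && (root_dist (tree_parent x) < root_dist x).
Proof.
move=> xr; rewrite /tree_parent (negbTE xr); case: pickP => [y -> //|none].
by have [y h1 h2] := root_dist_step xr; move: (none y); rewrite h1 h2.
Qed.

Lemma tree_parent_root : tree_parent r = r.
Proof. by rewrite /tree_parent eqxx. Qed.

Lemma tree_parent_reach x : exists k, iter k tree_parent x = r.
Proof.
elim: {x}(root_dist x).+1 {-2}x (ltnSn (root_dist x)) => // m IH x hx.
case: (eqVneq x r) => [->|xr]; first by exists 0.
case/andP: (tree_parentP xr) => _ h.
have [k hk] := IH (tree_parent x) (leq_trans h hx).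
by exists k.+1; rewrite iterSr.
Qed.

(* An edge of E missing from the parent tree would close a cycle with the
   path joining its ends in the parent tree, whose edges all lie in E. *)
Lemma parent_edges_tree_parent : parent_edges tree_parent r = E.
Proof.
apply/setP => e; apply/idP/idP.
  case/imsetP => z; rewrite inE => zr ->.
  by case/andP: (tree_parentP zr).
move=> eE; case: E_tree => [sz [_ acyclic]].
have /cards2P [u [v [uv ee]]] : #|e| == 2 by rewrite sz.
subst e; apply: contraT => nE.
have := (parent_edges_tree tree_parent_root tree_parent_reach).2.1 u v.
case/connectP => s ps; case: (shortenP ps) => s' ps' us' _ ls'.
have ss : 2 <= size s'.
  case: s' ps' us' ls' => [/= _ _ e|y [|z t]] //=.
    by move: uv; rewrite e eqxx.
  by rewrite andbT => ha _ e; move: nE; rewrite e; move: ha; rewrite /adj => ->.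
have ps2 : path (adj E) u s'.
  apply: sub_path ps' => a b; rewrite /adj => /imsetP [z]; rewrite inE => zr ->.
  by case/andP: (tree_parentP zr).
have cc : cycle (adj E) (u :: s') by rewrite /= rcons_path ps2 -ls' /adj setUC.
by move: (acyclic _ us' ss); rewrite cc.
Qed.

End TreeParent.

Section Encode.
Variables (n : nat) (g : 'I_n -> 'I_n) (a : 'I_n).

Definition recurrent x := fconnect g (g x) x.

Lemma recurrentP x : reflect (exists2 j, 0 < j & iter j g x = x) (recurrent x).
Proof.
apply: (iffP idP).
  move/iter_findex => h; exists (findex g (g x) x).+1 => //.
  by rewrite iterSr.
by move=> [[//|j] _ h]; rewrite /recurrent -{2}h iterSr; apply: fconnect_iter.
Qed.

Lemma recurrent_app x : recurrent x -> recurrent (g x).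
Proof.
by case/recurrentP => j j0 h; apply/recurrentP; exists j => //; rewrite -iterSr iterS h.
Qed.

Lemma recurrent_iter k x : recurrent x -> recurrent (iter k g x).
Proof. by move=> h; elim: k => //= k IH; apply: recurrent_app. Qed.

Lemma recurrent_iter_n x : recurrent (iter n g x).
Proof.
have [i [j [ij jn e]]] := iter_collision g x.
have hi : recurrent (iter i g x).
  apply/recurrentP; exists (j - i); first lia.
  by rewrite -iterD subnK // ltnW.
have -> : iter n g x = iter (n - i) g (iter i g x).
  by rewrite -iterD subnK // ltnW // (leq_trans ij jn).
exact: recurrent_iter.
Qed.

Lemma recurrent_inj x y : recurrent x -> recurrent y -> g x = g y -> x = y.
Proof.
move=> /recurrentP [i i0 hi] /recurrentP [j j0 hj] e.
rewrite -(iter_periodic j hi) -(iter_periodic i hj) mulnC.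
have ij0 : 0 < i * j by rewrite muln_gt0 i0.
by rewrite -(prednK ij0) !iterSr e.
Qed.

Lemma exists_recurrent_iter : exists m, recurrent (iter m g a).
Proof. by exists n; apply: recurrent_iter_n. Qed.

(* The orbit of [a] consists of a tail of length [tail_length] followed by the
   cycle of length [period] through [entry]. *)
Definition tail_length := ex_minn exists_recurrent_iter.
Definition entry := iter tail_length g a.

Lemma recurrent_entry : recurrent entry.
Proof. by rewrite /entry /tail_length; case: ex_minnP. Qed.

Lemma tail_length_min i : recurrent (iter i g a) -> tail_length <= i.
Proof. by rewrite /tail_length; case: ex_minnP => m _ H /H. Qed.

Lemma tail_length_le_n : tail_length <= n.
Proof. exact: tail_length_min (recurrent_iter_n a). Qed.

Lemma exists_return : exists k, (0 < k) && (iter k g entry == entry).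
Proof. by case/recurrentP: recurrent_entry => j j0 h; exists j; rewrite j0 h eqxx. Qed.

Definition period := ex_minn exists_return.

Lemma period_gt0 : 0 < period.
Proof. by rewrite /period; case: ex_minnP => k /andP []. Qed.

Lemma iter_period : iter period g entry = entry.
Proof. by rewrite /period; case: ex_minnP => k /andP [_ /eqP]. Qed.

Lemma period_min j : 0 < j -> iter j g entry = entry -> period <= j.
Proof. by rewrite /period; case: ex_minnP => k _ H j0 h; apply: H; rewrite j0 h eqxx. Qed.

Lemma iter_entry_mod j : iter j g entry = iter (j %% period) g entry.
Proof. by rewrite {1}(divn_eq j period) addnC iterD iter_periodic // iter_period. Qed.

Definition entry_cycle := traject g entry period.

Lemma entry_cycle_uniq : uniq entry_cycle.
Proof.
apply/(uniqP entry) => i j; rewrite !inE /entry_cycle size_traject => hi hj.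
rewrite !nth_traject //.
wlog ij : i j hi hj / i <= j.
  move=> H e; case: (leqP i j) => h; first exact: H.
  by symmetry; apply: H => //; apply: ltnW.
move=> e; case: (ltnP i j) => [lt|ji]; last by apply/eqP; rewrite eqn_leq ij ji.
have : iter (period - j + i) g entry = entry.
  by rewrite iterD e -iterD subnK ?iter_period // ltnW.
move/period_min; lia.
Qed.

Lemma entry_cycleP x : reflect (exists j, x = iter j g entry) (x \in entry_cycle).
Proof.
apply: (iffP idP); first by case/trajectP => i _ ->; exists i.
case=> j ->; rewrite iter_entry_mod; apply/trajectP; exists (j %% period) => //.
by rewrite ltn_mod period_gt0.
Qed.

Lemma recurrent_entry_cycle x : x \in entry_cycle -> recurrent x.
Proof. by case/entry_cycleP => j ->; apply/recurrent_iter/recurrent_entry. Qed.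

(* Listing the cycle through [entry] first makes the walk from [entry] up to
   [spine_head] run backwards around that cycle. *)
Definition off_cycle := [set x | recurrent x & x \notin entry_cycle].
Definition recurrent_seq := entry_cycle ++ enum off_cycle.
Definition spine := map g recurrent_seq.

Lemma recurrent_seq_uniq : uniq recurrent_seq.
Proof.
rewrite /recurrent_seq cat_uniq entry_cycle_uniq enum_uniq /= andbT.
by apply/hasP => [[x]]; rewrite mem_enum inE => /andP [_ /negP].
Qed.

Lemma mem_recurrent_seq x : (x \in recurrent_seq) = recurrent x.
Proof.
rewrite mem_cat mem_enum inE; case: (boolP (x \in entry_cycle)) => h /=.
  by rewrite (recurrent_entry_cycle h).
by rewrite andbT.
Qed.

Lemma spine_uniq : uniq spine.
Proof.
rewrite map_inj_in_uniq ?recurrent_seq_uniq // => x y.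
by rewrite !mem_recurrent_seq; apply: recurrent_inj.
Qed.

Lemma mem_spine x : (x \in spine) = recurrent x.
Proof.
apply/mapP/idP => [[y]|h]; first by rewrite mem_recurrent_seq => /recurrent_app h ->.
case/recurrentP: (h) => [[//|j] _ hj].
exists (iter j g x); first by rewrite mem_recurrent_seq; apply: recurrent_iter.
by rewrite -iterS.
Qed.

Lemma size_recurrent_seq : size recurrent_seq = size spine.
Proof. by rewrite size_map. Qed.

Lemma size_entry_cycle : size entry_cycle = period.
Proof. by rewrite size_traject. Qed.

Lemma period_le_size_spine : period <= size spine.
Proof. by rewrite -size_recurrent_seq size_cat size_entry_cycle leq_addr. Qed.

Lemma nth_spine i : i < size spine -> nth a spine i = g (nth a recurrent_seq i).
Proof. by move=> hi; rewrite (nth_map a) // size_recurrent_seq. Qed.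

Lemma nth_spine_cycle i : i < period -> nth a spine i = iter i.+1 g entry.
Proof.
move=> hi; rewrite nth_spine; last exact: leq_trans hi period_le_size_spine.
rewrite nth_cat size_entry_cycle hi (set_nth_default entry) ?size_entry_cycle //.
by rewrite nth_traject.
Qed.

Definition spine_parent x := if x \in spine then nth a spine (index x spine).-1 else g x.
Definition spine_head := nth a spine 0.
Definition spine_last := nth a spine (size spine).-1.

Lemma size_spine_gt0 : 0 < size spine.
Proof. exact: leq_trans period_gt0 period_le_size_spine. Qed.

Lemma spine_parent_nth i :
  i < size spine -> spine_parent (nth a spine i) = nth a spine i.-1.
Proof. by move=> hi; rewrite /spine_parent mem_nth // index_uniq // spine_uniq. Qed.

Lemma spine_parent_out x : x \notin spine -> spine_parent x = g x.
Proof. by rewrite /spine_parent => /negbTE ->. Qed.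

Lemma spine_parent_head : spine_parent spine_head = spine_head.
Proof. by rewrite /spine_head spine_parent_nth // size_spine_gt0. Qed.

Lemma iter_spine_parent_nth i j :
  i < size spine -> iter j spine_parent (nth a spine i) = nth a spine (i - j).
Proof. exact/iter_nth_pred/spine_parent_nth. Qed.

(* Off the spine [spine_parent] follows [g], which reaches a recurrent point,
   i.e. the spine, within [n] steps. *)
Lemma spine_parent_reach x : exists k, iter k spine_parent x = spine_head.
Proof.
suff [i hi] : exists i, iter i spine_parent x \in spine.
  exists (index (iter i spine_parent x) spine + i).
  by rewrite iterD -{2}(nth_index a hi) iter_spine_parent_nth ?index_mem // subnn.
suff H j : (exists i, iter i spine_parent x \in spine) \/
           iter j spine_parent x = iter j g x.
  by case: (H n) => // e; exists n; rewrite e mem_spine; apply: recurrent_iter_n.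
elim: j => [|j [IH|IH]]; [by right | by left |].
case: (boolP (iter j spine_parent x \in spine)) => h; first by left; exists j.
by right; rewrite !iterS IH spine_parent_out // -IH.
Qed.

Lemma iter_spine_parent_lastP y :
  (exists k, iter k spine_parent spine_last = y) <-> y \in spine.
Proof.
have hl : (size spine).-1 < size spine by rewrite prednK // size_spine_gt0.
split.
  move=> [k <-]; rewrite /spine_last iter_spine_parent_nth // mem_nth //.
  exact: leq_ltn_trans (leq_subr _ _) hl.
move=> hy; exists ((size spine).-1 - index y spine).
rewrite /spine_last iter_spine_parent_nth // subKn ?nth_index //.
by rewrite -ltnS prednK ?size_spine_gt0 // index_mem.
Qed.

Lemma iter_spine_parent_tail i : i <= tail_length -> iter i spine_parent a = iter i g a.
Proof.
elim: i => // i IH hi; rewrite !iterS IH; last exact: ltnW.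
by rewrite spine_parent_out // mem_spine; apply/negP => /tail_length_min; lia.
Qed.

Lemma nth_spine_entry : nth a spine period.-1 = entry.
Proof.
have h := period_gt0.
by rewrite nth_spine_cycle ?prednK ?iter_period //; lia.
Qed.

Lemma iter_spine_parent_entry j :
  iter j spine_parent entry = iter (period.-1 - j).+1 g entry.
Proof.
have h := period_gt0; have h2 := period_le_size_spine.
rewrite -{1}nth_spine_entry iter_spine_parent_nth; last lia.
by rewrite nth_spine_cycle //; lia.
Qed.

Lemma iter_spine_parent_startP y :
  (exists k, iter k spine_parent a = y) <-> (exists k, iter k g a = y).
Proof.
have hc : iter tail_length spine_parent a = entry by rewrite iter_spine_parent_tail.
split; move=> [k <-]; (case: (leqP k tail_length) => h;
  first by exists k; rewrite iter_spine_parent_tail);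
  rewrite -(subnK (ltnW h)) iterD.
  rewrite hc iter_spine_parent_entry.
  by exists ((period.-1 - (k - tail_length)).+1 + tail_length); rewrite iterD.
rewrite -/entry iter_entry_mod.
set t := (k - tail_length) %% period.
have ht : t < period by rewrite ltn_mod period_gt0.
case: (posnP t) => [->|t0]; first by exists tail_length.
exists ((period - t) + tail_length); rewrite iterD hc iter_spine_parent_entry.
by congr (iter _ g entry); lia.
Qed.

End Encode.

(* Reading a function off a rooted tree with parent map [p]: the spine is the
   path from [r1] to [r3], [tree_entry] is the first spine vertex above [a],
   and the spine up to [tree_entry] is, read backwards, the cycle of the
   function through [tree_entry]. *)
Section TreeMap.
Variables (n : nat) (p : 'I_n -> 'I_n) (r1 a r3 : 'I_n).

Definition up_from x := traject p x n.+1.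
Definition tree_spine := rev (take (index r1 (up_from r3)).+1 (up_from r3)).
Definition tree_tail_length := find [pred x | x \in tree_spine] (up_from a).
Definition tree_entry := nth a (up_from a) tree_tail_length.
Definition tree_period := (index tree_entry tree_spine).+1.
Definition tree_recurrent_seq :=
  rotr 1 (take tree_period tree_spine) ++ enum [set x in drop tree_period tree_spine].
Definition tree_map x :=
  if x \in tree_spine then nth a tree_spine (index x tree_recurrent_seq) else p x.

End TreeMap.

Section TreeMapEncode.
Variables (n : nat) (g : 'I_n -> 'I_n) (a : 'I_n).
Local Notation spine := (spine g a).
Local Notation p := (spine_parent g a).
Local Notation r1 := (spine_head g a).
Local Notation r3 := (spine_last g a).

Lemma tree_spine_encode : tree_spine p r1 r3 = spine.
Proof.
set L := (size spine).-1.
have hW := size_spine_gt0 g a; have hn := size_uniq_ord (spine_uniq g a).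
have hL : L < size spine by rewrite /L; lia.
have up i : i < n.+1 -> nth a (up_from p r3) i = nth a spine (L - i).
  move=> hi; rewrite /up_from (set_nth_default r3) ?size_traject // nth_traject //.
  by rewrite /spine_last iter_spine_parent_nth.
have ix : index r1 (up_from p r3) = L.
  apply: (@index_nth_first _ a); first by rewrite size_traject; lia.
    by rewrite up ?subnn //; lia.
  move=> j hj; rewrite up; last lia.
  rewrite /spine_head nth_uniq ?spine_uniq //; first by rewrite subn_eq0 -ltnNge.
  exact: leq_ltn_trans (leq_subr _ _) hL.
rewrite /tree_spine ix; apply: (eq_from_nth (x0 := a)).
  by rewrite size_rev size_takel ?size_traject; lia.
move=> i; rewrite size_rev size_takel ?size_traject; last lia.
move=> hi; rewrite nth_rev ?size_takel ?size_traject; try lia.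
by rewrite nth_take; last lia; rewrite up; [congr nth|]; lia.
Qed.

Lemma tree_entry_encode : tree_entry p r1 a r3 = entry g a.
Proof.
have hm := tail_length_le_n g a; rewrite /tree_entry.
have up i : i < n.+1 -> nth a (up_from p a) i = iter i p a.
  by move=> hi; rewrite /up_from nth_traject.
have -> : tree_tail_length p r1 a r3 = tail_length g a.
  rewrite /tree_tail_length tree_spine_encode.
  apply: (@find_nth_first _ a); first by rewrite size_traject.
    by rewrite /= up // iter_spine_parent_tail // mem_spine recurrent_entry.
  move=> j hj; rewrite /= up; last lia.
  rewrite iter_spine_parent_tail ?mem_spine; last exact: ltnW.
  by apply/negP => /tail_length_min; lia.
by rewrite up // iter_spine_parent_tail.
Qed.

Lemma tree_period_encode : tree_period p r1 a r3 = period g a.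
Proof.
have := period_le_size_spine g a; have := period_gt0 g a.
rewrite /tree_period tree_entry_encode tree_spine_encode -nth_spine_entry => h0 h.
by rewrite index_uniq ?spine_uniq ?prednK //; lia.
Qed.

Lemma rotr_take_spine : rotr 1 (take (period g a) spine) = entry_cycle g a.
Proof.
rewrite /spine -map_take take_size_cat ?size_entry_cycle // map_traject /entry_cycle.
have h := period_gt0 g a; case E : (period g a) h => [//|k] _.
have ck : iter k.+1 g (entry g a) = entry g a by rewrite -E iter_period.
by rewrite trajectSr -iterSr ck rotr1_rcons trajectS.
Qed.

Lemma drop_spine : [set x in drop (period g a) spine] = off_cycle g a.
Proof.
apply/setP => x; rewrite !inE mem_drop_uniq ?spine_uniq // mem_spine.
by rewrite -(mem_rotr 1) rotr_take_spine.
Qed.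

Lemma tree_map_encode : tree_map p r1 a r3 =1 g.
Proof.
have eS : tree_recurrent_seq p r1 a r3 = recurrent_seq g a.
  rewrite /tree_recurrent_seq tree_period_encode tree_spine_encode.
  by rewrite rotr_take_spine drop_spine.
move=> x; rewrite /tree_map eS tree_spine_encode.
case: (boolP (x \in spine)) => h; last by rewrite spine_parent_out.
have hS : x \in recurrent_seq g a by rewrite mem_recurrent_seq -(mem_spine g a).
by rewrite nth_spine ?nth_index // -size_recurrent_seq index_mem.
Qed.

End TreeMapEncode.

Section EncodeTreeMap.
Variables (n : nat) (p : 'I_n -> 'I_n) (r1 a r3 : 'I_n).
Hypothesis p_root : p r1 = r1.
Hypothesis p_reach : forall x, exists k, iter k p x = r1.
Local Notation spine' := (tree_spine p r1 r3).
Local Notation seq' := (tree_recurrent_seq p r1 a r3).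
Local Notation g' := (tree_map p r1 a r3).
Local Notation entry' := (tree_entry p r1 a r3).
Local Notation tail' := (tree_tail_length p r1 a r3).
Local Notation K := (tree_period p r1 a r3).
Local Notation d := (depth p_reach r3).

Lemma index_root_up_from : index r1 (up_from p r3) = d.
Proof.
have hd := depth_lt_n p_root p_reach r3; rewrite /up_from.
apply: (@index_nth_first _ r3); first by rewrite size_traject; lia.
  by rewrite nth_traject ?iter_depth //; lia.
move=> j hj; rewrite nth_traject; last lia.
by apply/eqP => /(depth_min p_reach); lia.
Qed.

Lemma size_tree_spine : size spine' = d.+1.
Proof.
have hd := depth_lt_n p_root p_reach r3.
rewrite /tree_spine size_rev index_root_up_from /up_from.
by rewrite size_takel ?size_traject //; lia.
Qed.

Lemma nth_tree_spine i : i <= d -> nth a spine' i = iter (d - i) p r3.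
Proof.
have hd := depth_lt_n p_root p_reach r3.
move=> hi; rewrite /tree_spine nth_rev index_root_up_from /up_from
  size_takel ?size_traject //; try lia.
rewrite nth_take; last lia.
rewrite (set_nth_default r3) ?size_traject ?nth_traject; try lia.
by congr (iter _ p r3); lia.
Qed.

Lemma tree_spine_uniq : uniq spine'.
Proof.
apply/(uniqP a) => i j; rewrite !inE size_tree_spine => hi hj.
rewrite !nth_tree_spine; try lia.
move/(iter_inj_le_depth p_root (leq_subr _ _) (leq_subr _ _)); lia.
Qed.

Lemma parent_nth_tree_spine i :
  i < size spine' -> p (nth a spine' i) = nth a spine' i.-1.
Proof.
rewrite size_tree_spine => hi; rewrite !nth_tree_spine; try lia.
case: i hi => [|i] hi /=; first by rewrite subn0 iter_depth p_root.
by rewrite -iterS; congr (iter _ p r3); lia.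
Qed.

Lemma nth0_tree_spine : nth a spine' 0 = r1.
Proof. by rewrite nth_tree_spine // subn0 iter_depth. Qed.

Lemma nth_last_tree_spine : nth a spine' d = r3.
Proof. by rewrite nth_tree_spine // subnn. Qed.

Lemma root_in_tree_spine : r1 \in spine'.
Proof. by rewrite -{1}nth0_tree_spine mem_nth // size_tree_spine. Qed.

Lemma tree_tail_length_lt : tail' < n.+1.
Proof.
have hd := depth_lt_n p_root p_reach a.
rewrite /tree_tail_length -(size_traject p a n.+1) -has_find; apply/hasP.
exists (iter (depth p_reach a) p a); last by rewrite /= iter_depth root_in_tree_spine.
by apply/trajectP; exists (depth p_reach a) => //; lia.
Qed.

Lemma tree_entryE : entry' = iter tail' p a.
Proof. by rewrite /tree_entry /up_from nth_traject // tree_tail_length_lt. Qed.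

Lemma tree_entry_in_spine : entry' \in spine'.
Proof.
have h : has [pred x | x \in spine'] (up_from p a).
  by rewrite has_find /up_from size_traject tree_tail_length_lt.
by have := nth_find a h.
Qed.

Lemma before_tree_tail_length j : j < tail' -> iter j p a \notin spine'.
Proof.
move=> hj; have := before_find a hj.
by rewrite /= /up_from nth_traject ?(ltn_trans hj tree_tail_length_lt) // => ->.
Qed.

Lemma tree_period_le_size : K <= size spine'.
Proof. by rewrite /tree_period index_mem tree_entry_in_spine. Qed.

Lemma nth_tree_period : nth a spine' K.-1 = entry'.
Proof. by rewrite /tree_period /= nth_index // tree_entry_in_spine. Qed.

Lemma perm_tree_recurrent_seq : perm_eq seq' spine'.
Proof.
rewrite /tree_recurrent_seq -{3}(cat_take_drop K spine').
apply: perm_cat; first by rewrite perm_rotr.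
apply: uniq_perm; first exact: enum_uniq.
  move: tree_spine_uniq; rewrite -{1}(cat_take_drop K spine') cat_uniq.
  by case/and3P.
by move=> x; rewrite mem_enum inE.
Qed.

Lemma tree_recurrent_seq_uniq : uniq seq'.
Proof. by rewrite (perm_uniq perm_tree_recurrent_seq) tree_spine_uniq. Qed.

Lemma size_tree_recurrent_seq : size seq' = size spine'.
Proof. exact: perm_size perm_tree_recurrent_seq. Qed.

Lemma mem_tree_recurrent_seq x : (x \in seq') = (x \in spine').
Proof. exact: (perm_mem perm_tree_recurrent_seq). Qed.

Lemma rotr_take_tree_spine : rotr 1 (take K spine') = entry' :: take K.-1 spine'.
Proof.
have h := tree_period_le_size; have K0 : 0 < K by [].
by rewrite -{1}(prednK K0) (take_nth a) ?prednK // nth_tree_period rotr1_rcons.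
Qed.

Lemma nth_tree_recurrent_seq i :
  i < K -> nth a seq' i = if i is i'.+1 then nth a spine' i' else entry'.
Proof.
move=> hi; have h := tree_period_le_size.
have sz : size (entry' :: take K.-1 spine') = K.
  by rewrite [size _]/= size_takel ?prednK //; apply: leq_trans h; apply: leq_pred.
rewrite /tree_recurrent_seq nth_cat rotr_take_tree_spine sz hi.
by case: i hi => // i hi; rewrite [nth _ (_ :: _) _]/= nth_take.
Qed.

Lemma tree_map_nth i : i < size spine' -> g' (nth a seq' i) = nth a spine' i.
Proof.
move=> hi; have hS : nth a seq' i \in spine'.
  by rewrite -mem_tree_recurrent_seq mem_nth // size_tree_recurrent_seq.
by rewrite /tree_map hS index_uniq ?tree_recurrent_seq_uniq ?size_tree_recurrent_seq.
Qed.

Lemma tree_map_in x : x \in spine' -> g' x \in spine'.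
Proof.
move=> h; rewrite /tree_map h mem_nth // -size_tree_recurrent_seq index_mem.
by rewrite mem_tree_recurrent_seq.
Qed.

Lemma tree_map_out x : x \notin spine' -> g' x = p x.
Proof. by rewrite /tree_map => /negbTE ->. Qed.

Lemma tree_map_inj x y : x \in spine' -> y \in spine' -> g' x = g' y -> x = y.
Proof.
rewrite -!mem_tree_recurrent_seq => hx hy.
rewrite /tree_map -!mem_tree_recurrent_seq hx hy.
move/eqP; rewrite nth_uniq ?tree_spine_uniq -?size_tree_recurrent_seq ?index_mem //.
by move/eqP/(congr1 (nth a seq')); rewrite !nth_index.
Qed.

Lemma iter_tree_map_in i x : x \in spine' -> iter i g' x \in spine'.
Proof. by move=> h; apply: iter_in => // y; apply: tree_map_in. Qed.

(* Off the spine [g'] agrees with [p], which has no cycles besides [r1]. *)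
Lemma recurrent_tree_mapE x : recurrent g' x = (x \in spine').
Proof.
apply/idP/idP => [|h].
  case/recurrentP => j j0 hj; apply: contraT => h.
  have H i : (iter i g' x \in spine') \/ (iter i g' x = iter i p x).
    elim: i => [|i [IH|IH]]; [by right | by left; rewrite iterS tree_map_in |].
    case: (boolP (iter i g' x \in spine')) => h'.
      by left; rewrite iterS tree_map_in.
    by right; rewrite !iterS IH tree_map_out // -IH.
  case: (H j) => [|e]; first by rewrite hj (negbTE h).
  have ex : x = r1 by apply: (iter_fixpoint_root p_root p_reach j0); rewrite -e.
  by move: h; rewrite ex root_in_tree_spine.
have [i [j [ij jn e]]] := iter_collision g' x.
apply/recurrentP; exists (j - i); first lia.
have : iter i g' x = iter (i + (j - i)) g' x by rewrite subnKC // ltnW.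
move: (j - i) => t {e}.
elim: i {ij jn} => [|i IH]; first by rewrite add0n => e; rewrite -e.
rewrite addSn !iterS => /tree_map_inj H; apply: IH; apply: H; exact: iter_tree_map_in.
Qed.

Lemma iter_tree_map_tail i : i <= tail' -> iter i g' a = iter i p a.
Proof.
elim: i => // i IH hi; rewrite !iterS IH ?tree_map_out //; last exact: ltnW.
exact: before_tree_tail_length.
Qed.

Lemma tail_length_tree_map : tail_length g' a = tail'.
Proof.
apply/eqP; rewrite eqn_leq; apply/andP; split.
  apply: tail_length_min; rewrite recurrent_tree_mapE iter_tree_map_tail //.
  by rewrite -tree_entryE tree_entry_in_spine.
rewrite leqNgt; apply/negP => h.
have := recurrent_entry g' a.
rewrite /entry recurrent_tree_mapE iter_tree_map_tail; last exact: ltnW.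
by rewrite (negbTE (before_tree_tail_length h)).
Qed.

Lemma entry_tree_map : entry g' a = entry'.
Proof. by rewrite /entry tail_length_tree_map iter_tree_map_tail // tree_entryE. Qed.

Lemma iter_tree_map_entry j : j < K -> iter j.+1 g' entry' = nth a spine' j.
Proof.
have hK := tree_period_le_size.
elim: j => [|j IH] hj.
  by rewrite /= -(nth_tree_recurrent_seq (i := 0)) // tree_map_nth // size_tree_spine.
rewrite iterS IH; last exact: ltnW.
by rewrite -(nth_tree_recurrent_seq (i := j.+1)) // tree_map_nth //; lia.
Qed.

Lemma period_tree_map : period g' a = K.
Proof.
have hK := tree_period_le_size.
have K0 : 0 < K by [].
have hK1 : iter K g' entry' = entry'.
  by rewrite -{1}(prednK K0) iter_tree_map_entry ?nth_tree_period // prednK.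
apply/eqP; rewrite eqn_leq; apply/andP; split.
  by apply: period_min => //; rewrite entry_tree_map.
rewrite leqNgt; apply/negP => h.
have h0 := period_gt0 g' a.
have hk : (period g' a).-1 < K by lia.
have := iter_period g' a.
rewrite entry_tree_map -(prednK h0) (iter_tree_map_entry hk) -nth_tree_period.
have s1 : (period g' a).-1 < size spine' := leq_trans hk hK.
have s2 : K.-1 < size spine' by rewrite prednK.
by move/eqP; rewrite (nth_uniq a s1 s2 tree_spine_uniq) => /eqP; lia.
Qed.

Lemma entry_cycle_tree_map : entry_cycle g' a = rotr 1 (take K spine').
Proof.
have hK := tree_period_le_size.
rewrite /entry_cycle entry_tree_map period_tree_map rotr_take_tree_spine.
apply: (eq_from_nth (x0 := a)).
  by rewrite size_traject /= size_takel ?prednK //; apply: leq_trans (leq_pred _) hK.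
move=> i; rewrite size_traject => hi.
rewrite (set_nth_default entry') ?size_traject // nth_traject //.
case: i hi => [//|i] hi.
rewrite iter_tree_map_entry; last lia.
by rewrite [nth _ (_ :: _) _]/= nth_take //; lia.
Qed.

Lemma spine_tree_map : spine g' a = spine'.
Proof.
have eQ : off_cycle g' a = [set x in drop K spine'].
  apply/setP => x; rewrite !inE recurrent_tree_mapE entry_cycle_tree_map mem_rotr.
  by rewrite mem_drop_uniq // tree_spine_uniq.
have eS : recurrent_seq g' a = seq'.
  by rewrite /recurrent_seq eQ entry_cycle_tree_map.
rewrite /spine eS; apply: (eq_from_nth (x0 := a)).
  by rewrite size_map size_tree_recurrent_seq.
move=> i; rewrite size_map size_tree_recurrent_seq => hi.
by rewrite (nth_map a) ?size_tree_recurrent_seq // tree_map_nth.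
Qed.

Lemma spine_parent_tree_map : spine_parent g' a =1 p.
Proof.
move=> x; rewrite /spine_parent spine_tree_map.
case: (boolP (x \in spine')) => h; last by rewrite tree_map_out.
by rewrite -{2}(nth_index a h) parent_nth_tree_spine // index_mem.
Qed.

Lemma spine_head_tree_map : spine_head g' a = r1.
Proof. by rewrite /spine_head spine_tree_map nth0_tree_spine. Qed.

Lemma spine_last_tree_map : spine_last g' a = r3.
Proof. by rewrite /spine_last spine_tree_map size_tree_spine nth_last_tree_spine. Qed.

End EncodeTreeMap.

Section Bijection.
Variable n : nat.
Implicit Type f : {ffun 'I_n.+1 -> 'I_n}.

Definition inner_map f (y : 'I_n) : 'I_n := f (incl y).
Definition top_value f : 'I_n := f ord_max.

Definition encode f : trt n :=
  let g := inner_map f in let a := top_value f in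
  (parent_edges (spine_parent g a) (spine_head g a), spine_head g a, a, spine_last g a).

Definition decode (p : 'I_n -> 'I_n) (r1 a r3 : 'I_n) : {ffun 'I_n.+1 -> 'I_n} :=
  [ffun x => if unlift ord_max x is Some y then tree_map p r1 a r3 y else a].

Lemma incl_lift (y : 'I_n) : incl y = lift ord_max y.
Proof. by apply: val_inj; rewrite /= /bump leqNgt ltn_ord. Qed.

Lemma incl_neq_max (y : 'I_n) : incl y != ord_max.
Proof. by rewrite incl_lift eq_sym neq_lift. Qed.

Lemma inner_map_decode p r1 a r3 : inner_map (decode p r1 a r3) = tree_map p r1 a r3.
Proof.
by apply: functional_extensionality => y; rewrite /inner_map ffunE incl_lift liftK.
Qed.

Lemma top_value_decode p r1 a r3 : top_value (decode p r1 a r3) = a.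
Proof. by rewrite /top_value ffunE unlift_none. Qed.

Lemma iter_fself_incl f k y : iter k (fself f) (incl y) = incl (iter k (inner_map f) y).
Proof. by elim: k => //= k ->. Qed.

Lemma iter_fself_max f k :
  iter k.+1 (fself f) ord_max = incl (iter k (inner_map f) (top_value f)).
Proof. by rewrite iterSr iter_fself_incl. Qed.

Lemma in_orbit_topE f x :
  in_orbit_top f x <->
  exists2 y, x = incl y & exists k, iter k (inner_map f) (top_value f) = y.
Proof.
split=> [[[|k] [// _ <-]]|[y -> [k <-]]]; last by exists k.+1; rewrite iter_fself_max.
by rewrite iter_fself_max; exists (iter k (inner_map f) (top_value f)) => //; exists k.
Qed.

(* [n+1] lies outside the range of [f], so it is never periodic. *)
Lemma periodicE f x :
  periodic f x <-> exists2 y, x = incl y & recurrent (inner_map f) y.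
Proof.
split=> [[j [j0 hj]]|[y -> /recurrentP [j j0 hj]]]; last first.
  by exists j; rewrite iter_fself_incl hj.
case: (unliftP ord_max x) hj => [y -> hj|-> hj]; last first.
  move: j0 hj; case: j => // j _.
  by rewrite iter_fself_max => /eqP; rewrite (negbTE (incl_neq_max _)).
exists y; first by rewrite incl_lift.
apply/recurrentP; exists j => //; apply: (@lift_inj _ ord_max).
by rewrite -!incl_lift -iter_fself_incl incl_lift.
Qed.

Lemma encode_tree f : is_trt (encode f).
Proof. exact: parent_edges_tree (spine_parent_head _ _) (spine_parent_reach _ _). Qed.

Lemma encode_inj : injective encode.
Proof.
move=> f1 f2; rewrite /encode; set g1 := inner_map f1; set g2 := inner_map f2.
case=> eE e1 ea e3; rewrite -e1 in eE.
have ep : spine_parent g1 (top_value f1) = spine_parent g2 (top_value f2).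
  apply: functional_extensionality; apply: parent_edges_inj eE.
  - exact: spine_parent_head.
  - exact: spine_parent_reach.
  - by rewrite e1; apply: spine_parent_head.
  - by rewrite e1; apply: spine_parent_reach.
have eg y : g1 y = g2 y.
  rewrite -(tree_map_encode g1 (top_value f1)) -(tree_map_encode g2 (top_value f2)).
  by rewrite ep e1 e3 ea.
apply/ffunP => x; case: (unliftP ord_max x) => [y ->|->]; last exact: ea.
by have := eg y; rewrite /g1 /g2 /inner_map incl_lift.
Qed.

Lemma encode_surj (t : trt n) : is_trt t -> exists f, encode f = t.
Proof.
case: t => [[[E r1] r2] r3] tE; rewrite /is_trt /tedges /= in tE.
have p_root := tree_parent_root r1 tE; have p_reach := tree_parent_reach r1 tE.
exists (decode (tree_parent r1 tE) r1 r2 r3).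
rewrite /encode inner_map_decode top_value_decode.
rewrite (functional_extensionality _ _ (spine_parent_tree_map r2 r3 p_root p_reach)).
by rewrite spine_head_tree_map // spine_last_tree_map // parent_edges_tree_parent.
Qed.

Lemma ancestor_encode f u v :
  ancestor (encode f) u v <->
  exists k, iter k (spine_parent (inner_map f) (top_value f)) v = u.
Proof. exact: (ancestor_parent_edges (spine_parent_head _ _) (spine_parent_reach _ _)). Qed.

Lemma encode_orbit_top f x :
  in_orbit_top f x <-> exists2 y, x = incl y & ancestor (encode f) y (root2 (encode f)).
Proof.
rewrite in_orbit_topE; split=> -[y -> hy]; exists y => //.
  by apply/ancestor_encode/iter_spine_parent_startP.
by apply/iter_spine_parent_startP/ancestor_encode.
Qed.

Lemma encode_periodic f x :
  periodic f x <-> exists2 y, x = incl y & ancestor (encode f) y (root3 (encode f)).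
Proof.
rewrite periodicE; split=> -[y -> hy]; exists y => //.
  by apply/ancestor_encode/iter_spine_parent_lastP; rewrite mem_spine.
by rewrite -(mem_spine _ (top_value f)); apply/iter_spine_parent_lastP/ancestor_encode.
Qed.

End Bijection.

Theorem theorem2 (n : nat) (hn : 1 <= n) :
  exists phi : {ffun 'I_n.+1 -> 'I_n} -> trt n,
    [/\ (forall f, is_trt (phi f)),
        injective phi,
        (forall t : trt n, is_trt t -> exists f, phi f = t)
      & forall f : {ffun 'I_n.+1 -> 'I_n},
          (forall x : 'I_n.+1,
             in_orbit_top f x <-> exists2 y : 'I_n, x = incl y & ancestor (phi f) y (root2 (phi f))) /\
          (forall x : 'I_n.+1,
             periodic f x <-> exists2 y : 'I_n, x = incl y & ancestor (phi f) y (root3 (phi f)))].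
Proof.
exists (@encode n); split.
- exact: encode_tree.
- exact: encode_inj.
- exact: encode_surj.
- by move=> f; split=> x; [apply: encode_orbit_top | apply: encode_periodic].
Qed.
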